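(* Let $(M,d)$ be a metric space and let $F: M \to M$ be nonexpansive with respect to $d$. Let $u \in M$ be a fixed point of $F$ and let $(x^m)_{m\in\mathbb{N}}$ be a sequence in $M$ converging to $u$. Suppose there are constants $\eta, \theta \in (0,1)$, $c > 0$ and $R>0$ such that $$d(F^k(y), u) \le c\,\eta^k \quad\text{for all } y \text{ with } d(y,u)\le R \text{ and all } k\in\mathbb{N},$$ and $$d(F(x^m), x^{m+1}) \le c\,\theta^m \quad \text{for all } m \in \mathbb{N}.$$ Then $$\limsup_{k\to\infty} d(x^k, u)^{1/k} \le \eta^{\lambda} = \theta^{1-\lambda} < 1, \qquad \text{where } \lambda = \frac{\log\theta}{\log\eta + \log\theta}.$$
   Context: $F$ is nonexpansive with respect to $d$ if $d(F(x), F(y)) \le d(x,y)$ for all $x, y \in M$. *)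

From Stdlib Require Import Reals.
From Coquelicot Require Import Coquelicot.
Open Scope R_scope.

Definition is_metric {M : Type} (d : M -> M -> R) : Prop :=
  (forall x y, 0 <= d x y) /\
  (forall x y, d x y = 0 <-> x = y) /\
  (forall x y, d x y = d y x) /\
  (forall x y z, d x z <= d x y + d y z).

Definition nonexpansive {M : Type} (d : M -> M -> R) (F : M -> M) : Prop :=
  forall x y, d (F x) (F y) <= d x y.

Definition iterate {M : Type} (F : M -> M) (k : nat) : M -> M := Nat.iter k F.

(* Real power a^b for a >= 0, with the convention 0^b = 0 (b > 0 in all uses). *)
Definition rpow (a b : R) : R := if Rle_dec a 0 then 0 else Rpower a b.

(* For m large, x^m lies in the ball where F contracts, so comparing x^(m+k) with the
   exact orbit F^k(x^m) gives d(x^(m+k), u) <= c eta^k + c theta^m / (1 - theta): the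
   first term is the contraction of the exact orbit, the second the accumulated
   perturbation, which nonexpansiveness keeps from growing.  Splitting n = m + k with
   k ~ lambda n and m ~ (1 - lambda) n balances eta^k against theta^m, and both are then
   O(q^n) with q = eta^lambda = theta^(1 - lambda). *)

From Stdlib Require Import Reals Lra Lia.
From Coquelicot Require Import Coquelicot.
Open Scope R_scope.

Section ApproximateOrbits.

Variables (M : Type) (d : M -> M -> R) (F : M -> M).
Hypotheses (d_metric : is_metric d) (F_nonexpansive : nonexpansive d F).

Lemma dist_iterate_approx_orbit (x : nat -> M) (theta c : R) :
  theta <> 1 ->
  (forall m, d (F (x m)) (x (S m)) <= c * theta ^ m) ->
  forall m k,
    d (iterate F k (x m)) (x (m + k)%nat) <= c * theta ^ m * (1 - theta ^ k) / (1 - theta).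
Proof.
  intros theta_ne1 x_step m k.
  destruct d_metric as [_ [d_eq0 [_ d_triangle]]].
  induction k as [|k IH].
  - rewrite Nat.add_0_r; unfold iterate; simpl.
    rewrite (proj2 (d_eq0 (x m) (x m)) eq_refl).
    right; field; lra.
  - rewrite Nat.add_succ_r.
    change (iterate F (S k) (x m)) with (F (iterate F k (x m))).
    eapply Rle_trans; [apply (d_triangle _ (F (x (m + k)%nat)))|].
    eapply Rle_trans.
    { apply Rplus_le_compat; [|apply x_step].
      eapply Rle_trans; [apply F_nonexpansive | apply IH]. }
    rewrite pow_add; simpl; right; field; lra.
Qed.

Lemma dist_approx_orbit_fixpoint (u : M) (x : nat -> M) (eta theta c Rad : R) :
  0 < theta < 1 -> 0 <= c ->
  (forall y k, d y u <= Rad -> d (iterate F k y) u <= c * eta ^ k) ->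
  (forall m, d (F (x m)) (x (S m)) <= c * theta ^ m) ->
  forall m k, d (x m) u <= Rad ->
    d (x (m + k)%nat) u <= c * eta ^ k + c * theta ^ m / (1 - theta).
Proof.
  intros theta01 c_ge0 F_contracts x_step m k x_near.
  destruct d_metric as [_ [_ [d_sym d_triangle]]].
  eapply Rle_trans; [apply (d_triangle _ (iterate F k (x m)))|].
  rewrite d_sym, Rplus_comm.
  apply Rplus_le_compat; [now apply F_contracts|].
  eapply Rle_trans; [apply (dist_iterate_approx_orbit x theta c); auto; lra|].
  assert (0 < theta ^ k) by (apply pow_lt; lra).
  assert (0 <= c * theta ^ m) by (apply Rmult_le_pos; [lra | apply pow_le; lra]).
  unfold Rdiv; apply Rmult_le_compat_r; [left; apply Rinv_0_lt_compat; lra | nra].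
Qed.

End ApproximateOrbits.

Lemma exp_le_exp (a b : R) : a <= b -> exp a <= exp b.
Proof.
  intros [lt_ab | ->]; [left; now apply exp_increasing | right; reflexivity].
Qed.

Lemma pow_le_exp_mul_ln (a r : R) (k : nat) :
  0 < a < 1 -> r <= INR k -> a ^ k <= exp (r * ln a).
Proof.
  intros a01 r_le_k.
  assert (ln a < 0) by (rewrite <- ln_1; apply ln_increasing; lra).
  rewrite <- Rpower_pow by lra; unfold Rpower.
  apply exp_le_exp; nra.
Qed.

Lemma eventually_floor_split (mu : R) (N : nat) :
  0 < mu <= 1 ->
  exists n0, forall n, (n0 <= n)%nat ->
    exists m, (N <= m <= n)%nat /\ mu * INR n - 1 < INR m <= mu * INR n.
Proof.
  intros mu01.
  assert (0 <= (INR N + 1) / mu) by (apply Rdiv_le_0_compat; [pose proof (pos_INR N) |]; lra).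
  destruct (nfloor_ex ((INR N + 1) / mu)) as [n0 [_ n0_gt]]; auto.
  exists (S n0); intros n n_ge.
  apply le_INR in n_ge; rewrite S_INR in n_ge.
  assert (N_lt : INR N + 1 < mu * INR n).
  { apply Rmult_lt_reg_l with (/ mu); [apply Rinv_0_lt_compat; lra|].
    rewrite <- Rmult_assoc, Rinv_l, Rmult_1_l by lra.
    unfold Rdiv in n0_gt; lra. }
  assert (0 <= mu * INR n) by (pose proof (pos_INR N); lra).
  destruct (nfloor_ex (mu * INR n)) as [m [m_le m_gt]]; auto.
  exists m; split; [split | lra].
  - assert (N_lt_m : INR N < INR m) by lra; apply INR_lt in N_lt_m; lia.
  - apply INR_le; nra.
Qed.

(* The constant is harmless since K^(1/n) -> 1. *)
Lemma LimSup_root_le_exp (a : nat -> R) (K L : R) :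
  0 < K ->
  (exists n0, forall n, (n0 <= n)%nat -> a n <= K * exp (INR n * L)) ->
  Rbar_le (LimSup_seq (fun n => rpow (a n) (/ INR n))) (Finite (exp L)).
Proof.
  intros K_pos [n0 a_le].
  set (v n := exp (ln K * / INR n + L)).
  assert (v_lim : is_lim_seq v (exp L)).
  { apply is_lim_seq_continuous; [apply derivable_continuous_pt, derivable_pt_exp|].
    assert (exponent_lim : is_lim_seq (fun n => ln K * / INR n + L) (ln K * 0 + L)).
    { apply is_lim_seq_plus'; [|apply is_lim_seq_const].
      apply (is_lim_seq_scal_l _ (ln K) 0).
      apply (is_lim_seq_inv _ p_infty); [apply is_lim_seq_INR | discriminate]. }
    now rewrite Rmult_0_r, Rplus_0_l in exponent_lim. }
  rewrite <- (is_LimSup_seq_unique _ _ (is_lim_LimSup_seq _ _ v_lim)).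
  apply LimSup_le.
  exists (S n0); intros n n_ge.
  assert (n_pos : 0 < INR n) by (apply lt_0_INR; lia).
  unfold rpow, v; destruct (Rle_dec (a n) 0) as [_ | a_pos]; [left; apply exp_pos|].
  apply Rnot_le_lt in a_pos.
  unfold Rpower; apply exp_le_exp.
  replace (ln K * / INR n + L) with (/ INR n * (ln K + INR n * L)) by (field; lra).
  apply Rmult_le_compat_l; [left; now apply Rinv_0_lt_compat|].
  rewrite <- (ln_exp (INR n * L)), <- ln_mult by (auto; apply exp_pos).
  apply ln_le; auto; apply a_le; lia.
Qed.

Lemma interpolation_exponent (eta theta : R) :
  0 < eta < 1 -> 0 < theta < 1 ->
  let lambda := ln theta / (ln eta + ln theta) in
  0 < lambda < 1 /\ lambda * ln eta = (1 - lambda) * ln theta /\ lambda * ln eta < 0.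
Proof.
  intros eta01 theta01 lambda.
  assert (ln eta < 0) by (rewrite <- ln_1; apply ln_increasing; lra).
  assert (ln theta < 0) by (rewrite <- ln_1; apply ln_increasing; lra).
  assert (lambda_def : lambda * (ln eta + ln theta) = ln theta) by (unfold lambda; field; lra).
  assert (0 < lambda < 1) by (split; nra).
  repeat split; nra.
Qed.

Lemma approx_orbit_exp_decay (M : Type) (d : M -> M -> R) (F : M -> M) (u : M)
  (x : nat -> M) (eta theta c Rad : R) :
  is_metric d -> nonexpansive d F ->
  is_lim_seq (fun m => d (x m) u) 0 ->
  0 < eta < 1 -> 0 < theta < 1 -> 0 < c -> 0 < Rad ->
  (forall y k, d y u <= Rad -> d (iterate F k y) u <= c * eta ^ k) ->
  (forall m, d (F (x m)) (x (S m)) <= c * theta ^ m) ->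
  let L := ln theta / (ln eta + ln theta) * ln eta in
  exists K, 0 < K /\
    exists n0, forall n, (n0 <= n)%nat -> d (x n) u <= K * exp (INR n * L).
Proof.
  intros d_metric F_nonexp x_lim eta01 theta01 c_pos Rad_pos F_contracts x_step L.
  destruct (interpolation_exponent eta theta eta01 theta01) as [lambda01 [L_balance _]].
  set (lambda := ln theta / (ln eta + ln theta)) in *.
  apply is_lim_seq_spec in x_lim.
  destruct (x_lim (mkposreal Rad Rad_pos)) as [N x_near]; simpl in x_near.
  exists (c + c / (theta * (1 - theta))).
  split; [assert (0 < c / (theta * (1 - theta))) by (apply Rdiv_lt_0_compat; nra); lra|].
  destruct (eventually_floor_split (1 - lambda) N) as [n0 split_n]; [lra|].
  exists n0; intros n n_ge.
  destruct (split_n n n_ge) as [m [[N_le_m m_le_n] [m_gt m_le]]].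
  destruct (Nat.le_exists_sub m n m_le_n) as [k [-> _]].
  rewrite (Nat.add_comm k m), plus_INR in *.
  assert (eta_k : eta ^ k <= exp ((INR m + INR k) * L)).
  { replace ((INR m + INR k) * L) with (lambda * (INR m + INR k) * ln eta)
      by (unfold L; fold lambda; ring).
    apply pow_le_exp_mul_ln; lra. }
  assert (theta_m : theta ^ m <= exp ((INR m + INR k) * L) / theta).
  { eapply Rle_trans;
      [apply (pow_le_exp_mul_ln _ ((1 - lambda) * (INR m + INR k) - 1)); lra|].
    replace (((1 - lambda) * (INR m + INR k) - 1) * ln theta)
      with ((INR m + INR k) * L + - ln theta)
      by (unfold L; fold lambda; rewrite L_balance; ring).
    rewrite exp_plus, exp_Ropp, exp_ln by lra; right; reflexivity. }
  assert (x_m_near : d (x m) u <= Rad).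
  { specialize (x_near m N_le_m); rewrite Rminus_0_r, Rabs_pos_eq in x_near
      by apply (proj1 d_metric); lra. }
  eapply Rle_trans;
    [apply (dist_approx_orbit_fixpoint M d F d_metric F_nonexp u x eta theta c Rad); auto; lra|].
  set (q := exp ((INR m + INR k) * L)) in *.
  assert (c * theta ^ m / (1 - theta) <= c * (q / theta) / (1 - theta)).
  { unfold Rdiv; apply Rmult_le_compat_r; [left; apply Rinv_0_lt_compat; lra|].
    apply Rmult_le_compat_l; lra. }
  assert (c * eta ^ k <= c * q) by (apply Rmult_le_compat_l; lra).
  replace ((c + c / (theta * (1 - theta))) * q) with (c * q + c * (q / theta) / (1 - theta))
    by (field; lra).
  lra.
Qed.

Theorem mainTheorem12 (M : Type) (d : M -> M -> R) (F : M -> M) (u : M)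
  (x : nat -> M) (eta theta c Rad : R) :
  is_metric d ->
  nonexpansive d F ->
  F u = u ->
  is_lim_seq (fun m => d (x m) u) 0 ->
  0 < eta < 1 -> 0 < theta < 1 -> 0 < c -> 0 < Rad ->
  (forall y k, d y u <= Rad -> d (iterate F k y) u <= c * eta ^ k) ->
  (forall m, d (F (x m)) (x (S m)) <= c * theta ^ m) ->
  let lambda := ln theta / (ln eta + ln theta) in
  Rbar_le (LimSup_seq (fun k => rpow (d (x k) u) (/ INR k))) (Finite (Rpower eta lambda)) /\
  Rpower eta lambda = Rpower theta (1 - lambda) /\
  Rpower eta lambda < 1.
Proof.
  intros d_metric F_nonexp _ x_lim eta01 theta01 c_pos Rad_pos F_contracts x_step lambda.
  destruct (interpolation_exponent eta theta eta01 theta01) as [_ [L_balance L_neg]].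
  unfold Rpower; fold lambda in L_balance, L_neg |- *.
  split; [|split].
  - destruct (approx_orbit_exp_decay M d F u x eta theta c Rad) as [K [K_pos decay]]; auto.
    exact (LimSup_root_le_exp _ K _ K_pos decay).
  - now rewrite L_balance.
  - rewrite <- exp_0; apply exp_increasing; lra.
Qed.
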